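(* Let $n\ge2$, and let $\Gamma,\Gamma'\in\mathcal{K}_n$ with associated arrays $A,A'$ and associated directed graphs $G,G'$. Then $\Gamma\simeq\Gamma'$ (as groups) if and only if $A=A'$, which in turn holds if and only if $G$ and $G'$ are isomorphic as directed graphs.
   Context: Let $e_1,\dots,e_n$ be the canonical basis of $\mathbb{R}^n$. For $1\le i\le n-1$ let $C_i$ be the diagonal matrix with $-1$ in position $i$ and $1$ elsewhere, and $c_i=\tfrac12e_{i+1}+\sum_{j=1}^{i-1}c_{ji}e_j$ with $c_{ji}\in\{0,\tfrac12\}$. $\mathcal{K}_n$ is the set of subgroups of $I(\mathbb{R}^n)$ generated by $\{C_iL_{c_i}:1\le i\le n-1\}\cup\{L_{e_j}:1\le j\le n\}$, over all choices of the $c_{ji}$ (here $BL_b$ is $x\mapsto B(x+b)$). The array $A$ of such a group is the $n\times n$ array whose $i$-th column, for $1\le i\le n-1$, is the coordinate vector of $c_i$, and whose $n$-th column is the vector with entries in $\{0,\tfrac12\}$ congruent to $c_1+\dots+c_{n-1}$ modulo $\mathbb{Z}^n$. The associated directed graph has vertex set $\{v_1,\dots,v_n\}$ and an arrow from $v_i$ to $v_j$ (loops allowed) if and only if the $(i,j)$ entry of $A$ equals $\tfrac12$. *)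

From HB Require Import structures.
From mathcomp Require Import all_boot all_order all_algebra all_fingroup.
From mathcomp Require Import reals.
Set Implicit Arguments. Unset Strict Implicit. Unset Printing Implicit Defensive.
Import Order.TTheory GRing.Theory Num.Theory.
Local Open Scope ring_scope.

Section KnDefs.
Variables (R : realType) (n : nat).

Notation V := 'cV[R]_n.

Inductive gen_grp (S : (V -> V) -> Prop) : (V -> V) -> Prop :=
| gen_id : gen_grp S id
| gen_base f : S f -> gen_grp S f
| gen_comp f g : gen_grp S f -> gen_grp S g -> gen_grp S (f \o g)
| gen_inv f g : gen_grp S f -> cancel f g -> cancel g f -> gen_grp S g.

Definition grp_iso (G H : (V -> V) -> Prop) : Prop :=
  exists phi : (V -> V) -> (V -> V),
    [/\ (forall f, G f -> H (phi f)),
        (forall f g, G f -> G g -> phi f = phi g -> f = g),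
        (forall h, H h -> exists f, G f /\ phi f = h) &
        (forall f g, G f -> G g -> phi (f \o g) = phi f \o phi g)].

Definition evec (j : 'I_n) : V := delta_mx j 0.

(* C_i : diagonal, -1 at position i, 1 elsewhere (0-based indices) *)
Definition Cmat (i : 'I_n) : 'M[R]_n :=
  \matrix_(k, l) (if k == l then (if k == i then -1 else 1) else 0).

(* the choice data: c j i = true iff c_{ji} = 1/2 (only used for j < i) *)
(* c_i = 1/2 e_{i+1} + sum_{j<i} c_{ji} e_j   (0-based: i <= n-2)       *)
Definition cvec (c : 'I_n -> 'I_n -> bool) (i : 'I_n) : V :=
  \col_k (if (k : nat) == i.+1 then 2^-1
          else if ((k : nat) < i)%N && c k i then 2^-1 else 0).

(* generators C_i L_{c_i} (x |-> C_i (x + c_i)), 0<=i<=n-2, and L_{e_j} *)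
Definition Kgens (c : 'I_n -> 'I_n -> bool) (f : V -> V) : Prop :=
  (exists i : 'I_n, (i.+1 < n)%N /\ f = (fun x => Cmat i *m (x + cvec c i)))
  \/ (exists j : 'I_n, f = (fun x => x + evec j)).

Definition Kgroup (c : 'I_n -> 'I_n -> bool) : (V -> V) -> Prop :=
  gen_grp (Kgens c).

(* the associated array: column i (i <= n-2) is c_i; last column is the
   vector with entries in {0,1/2} congruent to c_1+...+c_{n-1} mod Z^n *)
Definition Karray (c : 'I_n -> 'I_n -> bool) : 'M[R]_n :=
  \matrix_(k, i)
    (if (i.+1 < n)%N then cvec c i k 0
     else if (\sum_(j : 'I_n | (j.+1 < n)%N) cvec c j k 0) \is a Num.int
          then 0 else 2^-1).

Definition Kgraph (A : 'M[R]_n) : rel 'I_n := fun i j => A i j == 2^-1.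

Definition digraph_iso (E E' : rel 'I_n) : Prop :=
  exists s : {perm 'I_n}, forall i j, E i j = E' (s i) (s j).

End KnDefs.

From HB Require Import structures.
From mathcomp Require Import all_boot all_order all_algebra all_fingroup.
From mathcomp Require Import reals boolp.
From mathcomp Require Import ring lra zify.
Set Implicit Arguments. Unset Strict Implicit. Unset Printing Implicit Defensive.
Import Order.TTheory GRing.Theory Num.Theory.
Local Open Scope ring_scope.

(** Every element of a group in [K_n] is an affine map [x |-> D x + b] with
    [D] diagonal with entries [+-1], and [D] determines [b] modulo [Z^n].  Squares
    are translations, and the translations by [Z^n] are exactly the elements
    commuting with all squares, so an isomorphism [phi] restricts to an
    automorphism of [Z^n].  The conjugation and commutation relations between the
    generators [C_i L_(c_i)] and the unit translations force this automorphism to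
    be a signed permutation [sigma] fixing the last coordinate, and comparing the
    squares [(C_i L_(c_i))^2 = L_(2 c_i)] with those of their images shows that
    [sigma] preserves the arrows of the associated graph.  A permutation
    preserving the arrows and fixing [v_n] is the identity, by downward induction
    along the arrows [v_(i+1) -> v_i]; a digraph isomorphism fixes [v_n], the
    only vertex with a loop. *)

Section Affine.
Variables (R : realType) (n : nat).
Notation V := 'cV[R]_n.
Implicit Types (s : 'I_n -> bool) (b v : V).

Definition aff s b : V -> V := fun x => \col_k ((-1) ^+ s k * x k 0 + b k 0).

Definition transl v : V -> V := aff (fun=> false) v.

Lemma affE s b x k : aff s b x k 0 = (-1) ^+ s k * x k 0 + b k 0.
Proof. by rewrite mxE. Qed.

Lemma translE v x k : transl v x k 0 = x k 0 + v k 0.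
Proof. by rewrite affE mul1r. Qed.

Lemma fun_colP (f g : V -> V) : (forall x k, f x k 0 = g x k 0) -> f = g.
Proof. by move=> fg; apply: funext => x; apply/colP => k; apply: fg. Qed.

Lemma aff_comp s b s' b' :
  aff s b \o aff s' b' =
  aff (fun k => s k (+) s' k) (\col_k ((-1) ^+ s k * b' k 0 + b k 0)).
Proof. by apply: fun_colP => x k; rewrite /= !affE signr_addb; ring. Qed.

Lemma aff_sq s b :
  aff s b \o aff s b = transl (\col_k ((-1) ^+ s k * b k 0 + b k 0)).
Proof.
apply: fun_colP => x k; rewrite /= translE !affE.
by rewrite mulrDr mulrA -expr2 sqrr_sign; ring.
Qed.

Lemma transl0 : transl 0 = id.
Proof. by apply: fun_colP => x k; rewrite translE mxE addr0. Qed.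

Lemma translD v v' : transl (v + v') = transl v \o transl v'.
Proof. by apply: fun_colP => x k; rewrite /= !translE mxE; ring. Qed.

Lemma translK v : cancel (transl v) (transl (- v)).
Proof. by move=> x; apply/colP => k; rewrite !translE mxE addrK. Qed.

Lemma translNK v : cancel (transl (- v)) (transl v).
Proof. by move=> x; apply/colP => k; rewrite !translE mxE addrNK. Qed.

Lemma aff_inj s b s' b' : aff s b = aff s' b' -> s = s' /\ b = b'.
Proof.
move=> E; have Eb : b = b'.
  apply/colP => k; have := congr1 (fun f : V -> V => f 0 k 0) E.
  by rewrite !affE !mxE !mulr0 !add0r.
split=> //; apply: funext => k.
have := congr1 (fun f : V -> V => f (const_mx 1) k 0) E; rewrite !affE !mxE Eb mulr1 => /addIr.
by case: (s k); case: (s' k) => //= /eqP; rewrite ?expr0 ?expr1 -subr_eq0 => /eqP; lra.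
Qed.

Lemma aff_inv s b (g : V -> V) :
  cancel (aff s b) g -> g = aff s (\col_k ((-1) ^+ (~~ s k) * b k 0)).
Proof.
move=> fg; set b' := \col_k _.
have bb' : aff s b \o aff s b' = id.
  apply: fun_colP => x k; rewrite /= !affE mxE signrN mulrDr mulrA -expr2 sqrr_sign.
  by rewrite mulNr mulrN mulrA -expr2 sqrr_sign; ring.
by apply: funext => x; rewrite -[in LHS](congr1 (@^~ x) bb') /= fg.
Qed.

Lemma transl_conj_aff s b v :
  transl v \o aff s b \o transl v = aff s b <-> forall j, ~~ s j -> v j 0 = 0.
Proof.
split=> [E j sj | v0].
  have := congr1 (fun f : V -> V => f 0 j 0) E.
  by rewrite /= translE affE translE affE (negbTE sj) !mxE expr0; lra.
apply: fun_colP => x k; rewrite /= translE affE translE affE.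
by case sk: (s k); [|rewrite v0 ?sk //]; rewrite /= ?expr0 ?expr1; ring.
Qed.

Lemma aff_transl_comm s b v :
  aff s b \o transl v = transl v \o aff s b <-> forall j, s j -> v j 0 = 0.
Proof.
split=> [E j sj | v0].
  have := congr1 (fun f : V -> V => f 0 j 0) E.
  by rewrite /= translE affE translE affE sj !mxE expr1; lra.
apply: fun_colP => x k; rewrite /= translE affE translE affE.
by case sk: (s k); [rewrite v0 ?sk //|]; rewrite /= ?expr0 ?expr1; ring.
Qed.

Definition aff_sign (f : V -> V) k : bool := f (evec R k) k 0 < f 0 k 0.

Lemma aff_signE s b : aff_sign (aff s b) = s.
Proof.
apply: funext => k; rewrite /aff_sign !affE !mxE !eqxx mulr0 mulr1 add0r.
by case: (s k); rewrite /= ?expr0 ?expr1 ?ltrDl; lra.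
Qed.

Lemma aff_at0 s b : aff s b 0 = b.
Proof. by apply/colP => k; rewrite affE mxE mulr0 add0r. Qed.

Lemma evecE (j k : 'I_n) : evec R j k 0 = (k == j)%:R :> R.
Proof. by rewrite mxE andbT. Qed.

Lemma sum_scale_single (z : 'I_n -> R) (w : 'I_n -> V) i j :
  (forall k, k != i -> w k j 0 = 0) -> (\sum_k z k *: w k) j 0 = z i * w i j 0.
Proof.
move=> w0; rewrite summxE (bigD1 i) //= big1 ?addr0 ?mxE // => k ki.
by rewrite mxE w0 // mulr0.
Qed.

Lemma sum_scale_evec (x : 'I_n -> R) j : (\sum_k x k *: evec R k) j 0 = x j.
Proof.
rewrite (sum_scale_single _ (i := j)) ?evecE ?eqxx ?mulr1 // => k kj.
by rewrite evecE eq_sym (negbTE kj).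
Qed.

Definition centralizes_squares (G : (V -> V) -> Prop) (f : V -> V) :=
  forall h, G h -> f \o (h \o h) = (h \o h) \o f.

End Affine.

Section HalfIntegers.
Variable R : realType.

Definition half_int (x : R) (p : bool) :=
  exists z : int, x = z%:~R + (if p then 2^-1 else 0).

Lemma half_int_sign (e : bool) x p : half_int x p -> half_int ((-1) ^+ e * x) p.
Proof.
case=> z ->; rewrite mulr_sign; case: e; last by exists z.
case: p; [exists (- z - 1) | exists (- z)];
  rewrite ?intrD ?intrN /=; by field.
Qed.

Lemma half_intD x y p q : half_int x p -> half_int y q -> half_int (x + y) (p (+) q).
Proof.
case=> z -> [z' ->]; case: p; case: q => /=;
  [exists (z + z' + 1) | exists (z + z') | exists (z + z') | exists (z + z')];
  rewrite ?intrD /=; by field.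
Qed.

Lemma half_neq0 : (2^-1 : R) != 0.
Proof. by rewrite invr_eq0 pnatr_eq0. Qed.

Lemma half_Nint : (2^-1 : R) \isn't a Num.int.
Proof.
apply/negP => /intrP[m half_m].
have /(@intr_inj R) : (1 : int)%:~R = (2 * m)%:~R :> R by rewrite intrM -half_m mulfV ?pnatr_eq0.
by lia.
Qed.

Lemma half_int_int x : half_int x false -> x \is a Num.int.
Proof. by case=> z ->; rewrite addr0 intr_int. Qed.

Lemma half_int_parity (a a' e : bool) x :
  half_int x a' -> a%:R * (-1) ^+ e = 2 * x -> a = a'.
Proof.
case=> z -> E.
have /(@intr_inj R) : ((-1) ^+ e * a%:Z)%:~R = (2 * z + a'%:Z)%:~R :> R.
  rewrite intrM intr_sign mulrC E intrD intrM.
  by case: (a'); rewrite /= ?addr0 //; field.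
by rewrite mulr_sign; case: (a) (a') (e) => [] [] [] /=; lia.
Qed.

Lemma int_num_mul_eq1 x y :
  x \is a Num.int -> y \is a Num.int -> x * y = 1 -> exists e : bool, y = (-1) ^+ e :> R.
Proof.
move=> /intrP[m ->] /intrP[m' ->] /eqP; rewrite -intrM -[1]/(1%:~R) eqr_int.
move=> /eqP/intUnitRing.unitzPl m'_unit.
have [->|->] : m' = 1 \/ m' = -1 by lia.
  by exists false.
by exists true; rewrite expr1.
Qed.
End HalfIntegers.

Section Kgroup.
Variables (R : realType) (n : nat) (c : 'I_n -> 'I_n -> bool).
Notation V := 'cV[R]_n.
Notation G := (Kgroup (R := R) c).

(* Entry [(k, i)] of the array, for [i.+1 < n], is [1/2] iff [arrow k i]. *)
Definition arrow (k i : 'I_n) : bool := ((k : nat) == i.+1) || ((k < i)%N && c k i).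

Definition arrow_parity (s : 'I_n -> bool) k : bool := \big[addb/false]_(i | s i) arrow k i.

Lemma arrownn k : arrow k k = false.
Proof. by rewrite /arrow ltnn andFb orbF eqn_leq ltnn andbF. Qed.

Lemma cvecE i k : cvec R c i k 0 = if arrow k i then 2^-1 else 0 :> R.
Proof. by rewrite mxE /arrow; case: eqP. Qed.

Lemma arrow_parity_xor s s' k :
  arrow_parity (fun i => s i (+) s' i) k = arrow_parity s k (+) arrow_parity s' k.
Proof.
rewrite /arrow_parity [LHS]big_mkcond [in RHS]big_mkcond [X in _ (+) X]big_mkcond.
by rewrite -big_split; apply: eq_bigr => i _; case: (s i); case: (s' i); case: arrow.
Qed.

Definition Kshift i : V := \col_k ((-1) ^+ (k == i) * cvec R c i k 0).

Definition Kgen i : V -> V := aff (pred1 i) (Kshift i).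

Lemma Cmat_mulE i (y : V) k : (Cmat R i *m y) k 0 = (-1) ^+ (k == i) * y k 0.
Proof.
rewrite mxE (bigD1 k) //= big1 => [|j /negbTE jk]; last by rewrite mxE eq_sym jk mul0r.
by rewrite mxE eqxx addr0; case: eqP.
Qed.

Lemma KgenE i : (fun x => Cmat R i *m (x + cvec R c i)) = Kgen i.
Proof. by apply: fun_colP => x k; rewrite Cmat_mulE affE !mxE mulrDr. Qed.

Lemma Kgroup_Kgen (i : 'I_n) : (i.+1 < n)%N -> G (Kgen i).
Proof. by move=> lt_i; apply: gen_base; left; exists i; rewrite KgenE. Qed.

Lemma Kgroup_transl_evec k : G (transl (evec R k)).
Proof.
by apply: gen_base; right; exists k; apply: fun_colP => x j; rewrite translE [RHS]mxE.
Qed.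

Lemma Kgen_sq i : Kgen i \o Kgen i = transl (\sum_k (arrow k i : nat)%:~R *: evec R k).
Proof.
rewrite aff_sq; congr transl; apply/colP => k.
rewrite sum_scale_evec [LHS]mxE [Kshift i k 0]mxE cvecE /=.
case: (eqVneq k i) => [-> | _]; first by rewrite arrownn !mulr0 addr0.
rewrite expr0 !mul1r; case: arrow => /=; [by field | by rewrite addr0].
Qed.

Definition Kaffine (s : 'I_n -> bool) (b : V) :=
  (forall k, s k -> (k.+1 < n)%N) /\ forall k, half_int (b k 0) (arrow_parity s k).

Lemma Kgroup_aff f : G f -> exists s b, f = aff s b /\ Kaffine s b.
Proof.
elim=> {f} [|f [[i [lt_i ->]] | [j ->]] | f g _ [s [b [-> [ss bs]]]] _ [s' [b' [-> [ss' bs']]]]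
           | f g _ [s [b [-> [ss bs]]]] fg _].
- exists (fun=> false), 0; rewrite -/(transl 0) transl0; split=> //; split=> // k.
  by rewrite /arrow_parity big_pred0 // mxE; exists 0; rewrite addr0.
- exists (pred1 i), (Kshift i); rewrite KgenE; split=> //; split=> [k /eqP -> // | k].
  rewrite /arrow_parity big_pred1_eq mxE; apply: half_int_sign.
  by rewrite cvecE; exists 0; rewrite add0r.
- exists (fun=> false), (evec R j); split.
    by apply: fun_colP => x k; rewrite translE [LHS]mxE.
  split=> // k; rewrite /arrow_parity big_pred0 // evecE.
  by exists (k == j : nat); rewrite addr0.
- rewrite aff_comp; do 2!eexists; split; first reflexivity.
  split=> k; first by case: (s k) (ss k) (ss' k); case: (s' k).
  by rewrite mxE arrow_parity_xor addbC; apply: half_intD; first exact: half_int_sign.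
- rewrite (aff_inv fg); do 2!eexists; split; first reflexivity.
  by split=> // k; rewrite mxE; exact: half_int_sign.
Qed.

Lemma Kgroup_affE f : G f -> f = aff (aff_sign f) (f 0) /\ Kaffine (aff_sign f) (f 0).
Proof. by case/Kgroup_aff=> s [b [-> sb]]; rewrite aff_signE aff_at0. Qed.

Lemma transl_centralizes_squares v : centralizes_squares G (transl v).
Proof.
move=> h /Kgroup_aff[s [b [-> _]]]; rewrite aff_sq.
by apply: fun_colP => x k; rewrite /= !translE; ring.
Qed.

Lemma centralizes_squares_transl f : G f -> centralizes_squares G f ->
  exists2 b, f = transl b & forall k, b k 0 \is a Num.int.
Proof.
case/Kgroup_aff=> s [b [-> [_ bs]]] sq.
have s0 : s = (fun=> false).
  apply: funext => k; apply/negbTE/negP => sk.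
  have := congr1 (fun f : V -> V => f 0 k 0) (sq _ (Kgroup_transl_evec k)).
  by rewrite /= affE !translE affE sk !mxE eqxx /= expr1; lra.
exists b; first by rewrite s0.
by move=> k; apply: half_int_int; have := bs k; rewrite s0 /arrow_parity big_pred0.
Qed.
End Kgroup.

Lemma ltn_ord_max n (k : 'I_n.+1) : (k < n)%N = (k != ord_max).
Proof. by rewrite ltn_neqAle -ltnS ltn_ord andbT -(inj_eq val_inj). Qed.

Lemma ord_max_ge n (k : 'I_n.+1) : (n <= k)%N -> k = ord_max.
Proof. by move=> ge_k; apply/val_inj/eqP; rewrite /= eqn_leq ge_k andbT -ltnS. Qed.

Section SignedPermutation.
Variables (R : realType) (n : nat).
Notation V := 'cV[R]_n.+1.
Notation l := (@ord_max n).
(* [w k] will be the translation vector of [phi (L_(e_k))], and [S i] the set of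
   coordinates reflected by [phi (C_i L_(c_i))]. *)
Variables (w : 'I_n.+1 -> V) (S : 'I_n.+1 -> pred 'I_n.+1).
Implicit Types (i j k : 'I_n.+1) (z : 'I_n.+1 -> int).
Hypothesis w_int : forall k j, w k j 0 \is a Num.int.
Hypothesis w_span : forall j, exists z, evec R j = \sum_k (z k)%:~R *: w k.
Hypothesis S_neq0 : forall i, (i < n)%N -> exists j, S i j.
Hypothesis S_sub : forall i j, (i < n)%N -> S i j -> (j < n)%N.
Hypothesis w_supp : forall i j, (i < n)%N -> ~~ S i j -> w i j 0 = 0.
Hypothesis w_vanish : forall i k j, (i < n)%N -> k != i -> S i j -> w k j 0 = 0.

Lemma span_coord j : exists z,
  forall j', (\sum_k (z k)%:~R *: w k) j' 0 = (j' == j)%:R.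
Proof. by have [z ez] := w_span j; exists z => j'; rewrite -ez evecE. Qed.

Lemma sum_w_S z i j : (i < n)%N -> S i j ->
  (\sum_k (z k)%:~R *: w k) j 0 = (z i)%:~R * w i j 0.
Proof. by move=> lt_i Sij; apply: sum_scale_single => k ki; apply: w_vanish Sij. Qed.

Lemma sum_w_notS z j : (forall i, (i < n)%N -> ~~ S i j) ->
  (\sum_k (z k)%:~R *: w k) j 0 = (z l)%:~R * w l j 0.
Proof.
move=> notS; apply: sum_scale_single => k; rewrite -ltn_ord_max => lt_k.
exact: w_supp (notS k lt_k).
Qed.

Lemma S_pred1 i j j' : (i < n)%N -> S i j -> S i j' -> j' = j.
Proof.
move=> lt_i Sij Sij'; apply/eqP; apply: contraT => /negbTE jj'.
have [z ez] := span_coord j; have [z' ez'] := span_coord j'.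
have := ez j'; have := ez j; have := ez' j'.
rewrite !(sum_w_S _ lt_i) // jj' !eqxx /= ?mulr1n ?mulr0n => zw'1 zw1 zw'0.
have zi0 : (z i)%:~R = 0 :> R by rewrite -[LHS]mulr1 -[X in _ * X]zw'1 mulrCA zw'0 mulr0.
by move: zw1; rewrite zi0 mul0r => /eqP; rewrite eq_sym oner_eq0.
Qed.

Lemma w_sign i j : (i < n)%N -> S i j -> exists e : bool, w i j 0 = (-1) ^+ e.
Proof.
move=> lt_i Sij; have [z ez] := span_coord j.
by apply: (@int_num_mul_eq1 _ (z i)%:~R) => //; rewrite ?intr_int // -sum_w_S // ez eqxx.
Qed.

Lemma S_max i : (i < n)%N -> ~~ S i l.
Proof. by move=> lt_i; apply/negP => /(S_sub lt_i); rewrite ltnn. Qed.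

Lemma w_max_sign : exists e : bool, w l l 0 = (-1) ^+ e.
Proof.
have [z ez] := span_coord l.
apply: (@int_num_mul_eq1 _ (z l)%:~R); rewrite ?intr_int //.
by rewrite -sum_w_notS ?ez ?eqxx //; exact: S_max.
Qed.

Lemma w_max_off j : j != l -> w l j 0 = 0.
Proof.
move=> jl.
have [/existsP[i /andP[lt_i Sij]] | notS] := boolP [exists i : 'I_n.+1, (i < n)%N && S i j].
  by apply: w_vanish Sij; rewrite // eq_sym -ltn_ord_max.
have {}notS i : (i < n)%N -> ~~ S i j.
  by move=> lt_i; apply: contra notS => Sij; apply/existsP; exists i; rewrite lt_i.
have [z ez] := span_coord j; have [e we] := w_max_sign.
have := ez l; rewrite sum_w_notS; last exact: S_max.
rewrite eq_sym (negbTE jl) we => /eqP; rewrite mulf_eq0 signr_eq0 orbF => /eqP zl0.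
by have := ez j; rewrite sum_w_notS // zl0 mul0r eqxx => /eqP; rewrite eq_sym oner_eq0.
Qed.

(* The default [l] is only used for [sigma l]: for [i < n] the pick succeeds. *)
Definition sigma i : 'I_n.+1 := odflt l [pick j | (i < n)%N && S i j].

Lemma S_sigma i : (i < n)%N -> S i =1 pred1 (sigma i).
Proof.
rewrite /sigma => lt_i; case: pickP => [j /andP[_ Sij] | none] /=.
  by move=> j'; apply/idP/eqP => [/(S_pred1 lt_i Sij) | ->].
by have [j Sij] := S_neq0 lt_i; have := none j; rewrite lt_i Sij.
Qed.

Lemma sigma_max : sigma l = l.
Proof. by rewrite /sigma; case: pickP => // j; rewrite ltnn. Qed.

Lemma w_sigma k : exists e : bool, w k = (-1) ^+ e *: evec R (sigma k).
Proof.
have [[e we] w0] : (exists e : bool, w k (sigma k) 0 = (-1) ^+ e) /\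
                   (forall j, j != sigma k -> w k j 0 = 0).
  case: (ltnP k n) => [lt_k | ge_k]; last first.
    rewrite (ord_max_ge ge_k).
    by rewrite sigma_max; split; [exact: w_max_sign | exact: w_max_off].
  split=> [|j jk]; first by apply: (w_sign lt_k); rewrite (S_sigma lt_k) /=.
  by apply: (w_supp lt_k); rewrite (S_sigma lt_k).
exists e; apply/colP => j; rewrite mxE evecE.
by case: eqP => [-> | /eqP jk]; rewrite ?mulr1 ?we // mulr0 w0.
Qed.

Lemma sigma_lt i : (i < n)%N -> (sigma i < n)%N.
Proof. by move=> lt_i; apply: (S_sub lt_i); rewrite (S_sigma lt_i) /=. Qed.

Lemma sigma_inj : injective sigma.
Proof.
move=> k1 k2 eq_s; apply/eqP; apply: contraT => k12.
case: (ltnP k2 n) => [lt_k2 | ge_k2].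
  have [e we] := w_sigma k1.
  have S2 : S k2 (sigma k1) by rewrite eq_s (S_sigma lt_k2) /=.
  have := w_vanish lt_k2 k12 S2; rewrite we mxE evecE eqxx mulr1 => /eqP.
  by rewrite signr_eq0.
have k2l := ord_max_ge ge_k2.
have lt_k1 : (k1 < n)%N by rewrite ltn_ord_max -k2l.
by have := sigma_lt lt_k1; rewrite eq_s k2l sigma_max ltnn.
Qed.

Lemma signed_perm_of_span : exists sigma : 'I_n.+1 -> 'I_n.+1,
  [/\ injective sigma, sigma l = l,
      forall i, (i < n)%N -> S i =1 pred1 (sigma i) &
      forall k, exists e : bool, w k = (-1) ^+ e *: evec R (sigma k)].
Proof.
by exists sigma; split; [exact: sigma_inj | exact: sigma_max | exact: S_sigma | exact: w_sigma].
Qed.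
End SignedPermutation.

Section ArrayGraph.
Variables (R : realType) (n : nat).
Implicit Types c : 'I_n -> 'I_n -> bool.

Lemma cvec_eq_arrow c c' i :
  cvec R c i = cvec R c' i <-> forall k, arrow c k i = arrow c' k i.
Proof.
split=> [/colP eq_cv k | eq_a]; last by apply/colP => k; rewrite !cvecE eq_a.
have := eq_cv k; rewrite !cvecE.
have half_neq0 := negbTE (half_neq0 R).
by case: arrow; case: arrow => // /eqP; rewrite ?half_neq0 // eq_sym half_neq0.
Qed.

Lemma Karray_eq_arrow c c' :
  Karray R c = Karray R c' <->
  forall k i : 'I_n, (i.+1 < n)%N -> arrow c k i = arrow c' k i.
Proof.
have col_eq : Karray R c = Karray R c' <->
              forall i : 'I_n, (i.+1 < n)%N -> cvec R c i = cvec R c' i.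
  split=> [/matrixP eq_A i lt_i | eq_cv].
    by apply/colP => k; have := eq_A k i; rewrite [LHS]mxE [RHS]mxE lt_i.
  apply/matrixP => k i; rewrite [LHS]mxE [RHS]mxE; case: ifP => [lt_i | _]; first by rewrite eq_cv.
  by under eq_bigr => j lt_j do rewrite eq_cv //.
rewrite col_eq; split=> [eq_cv k i lt_i | eq_a i lt_i].
  by have /cvec_eq_arrow := eq_cv i lt_i; apply.
by apply/cvec_eq_arrow => k; apply: eq_a.
Qed.

Lemma Kgroup_eq c c' : Karray R c = Karray R c' -> Kgroup (R := R) c = Kgroup c'.
Proof.
move=> /Karray_eq_arrow eq_a.
have eq_cv (i : 'I_n) : (i.+1 < n)%N -> cvec R c i = cvec R c' i.
  by move=> lt_i; apply/cvec_eq_arrow => k; apply: eq_a.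
suff eq_gens : Kgens (R := R) c = Kgens c' by rewrite /Kgroup eq_gens.
apply: funext => f; apply: propext; rewrite /Kgens.
by split=> -[[i [lt_i ->]] | ?]; (try by right); left; exists i; rewrite eq_cv.
Qed.

End ArrayGraph.

Lemma grp_iso_refl (R : realType) n (G : ('cV[R]_n -> 'cV[R]_n) -> Prop) : grp_iso G G.
Proof. by exists id; split=> // h Gh; exists h. Qed.

Section GraphLoop.
Variables (R : realType) (n : nat) (c : 'I_n.+1 -> 'I_n.+1 -> bool).

Lemma Kgraph_arrow (k i : 'I_n.+1) : (i < n)%N -> Kgraph (Karray R c) k i = arrow c k i.
Proof.
move=> lt_i; rewrite /Kgraph mxE ltnS lt_i cvecE.
by case: arrow; rewrite ?eqxx // eq_sym (negbTE (half_neq0 R)).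
Qed.

Lemma Kgraph_loop : (0 < n)%N -> Kgraph (Karray R c) ord_max ord_max.
Proof.
move=> n_gt0; rewrite /Kgraph mxE ltnn.
have lt_j0 : (n.-1 < n.+1)%N by lia.
pose j0 : 'I_n.+1 := Ordinal lt_j0.
suff -> : \sum_(j : 'I_n.+1 | (j.+1 < n.+1)%N) cvec R c j ord_max 0 = 2^-1.
  by rewrite (negbTE (half_Nint R)).
rewrite (bigD1 j0) /=; last by lia.
rewrite big1 ?addr0 => [|j /andP[lt_j jj0]]; rewrite cvecE /arrow /=.
  by rewrite prednK // eqxx.
have -> : (n == j.+1) = false by apply/negbTE; move: jj0; rewrite -(inj_eq val_inj) /=; lia.
by have -> : (n < j)%N = false by lia.
Qed.
End GraphLoop.

Definition arrow_iso n (c c' : 'I_n.+1 -> 'I_n.+1 -> bool) (sigma : 'I_n.+1 -> 'I_n.+1) :=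
  [/\ injective sigma, sigma ord_max = ord_max &
      forall k i : 'I_n.+1, (i < n)%N -> arrow c k i = arrow c' (sigma k) (sigma i)].

Section Isomorphism.
Variables (R : realType) (n : nat) (c c' : 'I_n.+1 -> 'I_n.+1 -> bool).
Notation V := 'cV[R]_n.+1.
Notation G := (Kgroup (R := R) c).
Notation G' := (Kgroup (R := R) c').
Variable phi : (V -> V) -> V -> V.
Hypothesis phi_in : forall f, G f -> G' (phi f).
Hypothesis phi_inj : forall f g, G f -> G g -> phi f = phi g -> f = g.
Hypothesis phi_onto : forall h, G' h -> exists f, G f /\ phi f = h.
Hypothesis phiM : forall f g, G f -> G g -> phi (f \o g) = phi f \o phi g.
Implicit Types (i j k : 'I_n.+1) (z : 'I_n.+1 -> int).

Lemma phi_id : phi id = id.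
Proof.
have [s [b [phi_id_aff _]]] := Kgroup_aff (phi_in (gen_id _)).
have : phi id = phi id \o phi id := phiM (gen_id _) (gen_id _).
rewrite phi_id_aff aff_sq => /aff_inj[-> /colP b2b].
have -> : b = 0 by apply/colP => k; have := b2b k; rewrite !mxE expr0 mul1r; lra.
exact: transl0.
Qed.

Lemma phi_centralizes_squares f :
  G f -> centralizes_squares G f <-> centralizes_squares G' (phi f).
Proof.
move=> Gf; split=> [fsq h' /phi_onto[h [Gh <-]] | phif_sq h Gh];
  have Ghh : G (h \o h) := gen_comp Gh Gh.
  by rewrite -(phiM Gh Gh) -(phiM Gf Ghh) -(phiM Ghh Gf) fsq.
apply: phi_inj; [exact: gen_comp Gf Ghh | exact: gen_comp Ghh Gf |].
rewrite (phiM Gf Ghh) (phiM Ghh Gf) (phiM Gh Gh); exact: phif_sq (phi_in Gh).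
Qed.

Let w k : V := phi (transl (evec R k)) 0.

Lemma phi_transl_evec k :
  phi (transl (evec R k)) = transl (w k) /\ forall j, w k j 0 \is a Num.int.
Proof.
have Gk := Kgroup_transl_evec R c k.
have cs := (phi_centralizes_squares Gk).1 (@transl_centralizes_squares _ _ c _).
have [b phi_b b_int] := centralizes_squares_transl (phi_in Gk) cs.
by rewrite /w phi_b -[transl b 0]/(aff _ b 0) aff_at0.
Qed.

Lemma phi_transl_sum z :
  G (transl (\sum_k (z k)%:~R *: evec R k)) /\
  phi (transl (\sum_k (z k)%:~R *: evec R k)) = transl (\sum_k (z k)%:~R *: w k).
Proof.
pose rel v v' := G (transl v) /\ phi (transl v) = transl v'.
have rel0 : rel 0 0 by split; [rewrite transl0; exact: gen_id | rewrite transl0 phi_id].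
have relD v1 v1' v2 v2' : rel v1 v1' -> rel v2 v2' -> rel (v1 + v2) (v1' + v2').
  by move=> [G1 e1] [G2 e2]; rewrite /rel !translD phiM // e1 e2; split=> //; exact: gen_comp.
have relN v v' : rel v v' -> rel (- v) (- v').
  move=> [Gv ev]; have Gnv : G (transl (- v)) := gen_inv Gv (translK v) (translNK v).
  split=> //; apply: funext => x.
  have inv : phi (transl (- v)) \o transl v' = id.
    by rewrite -ev -phiM // -translD addNr transl0 phi_id.
  by have := congr1 (@^~ (transl (- v') x)) inv => /= <-; rewrite translNK.
have relZ v v' (m : int) : rel v v' -> rel (m%:~R *: v) (m%:~R *: v').
  move=> r; have relN_nat (k : nat) : rel (k%:R *: v) (k%:R *: v').
    elim: k => [|k IH]; first by rewrite !scale0r.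
    by rewrite mulrS !scalerDl !scale1r; exact: relD.
  by case: m => k; rewrite ?NegzE ?intrN ?scaleNr; [exact: relN_nat | exact/relN/relN_nat].
apply: (big_ind2 rel rel0 relD) => k _; apply: relZ.
by have [phi_t _] := phi_transl_evec k; split; [exact: Kgroup_transl_evec | exact: phi_t].
Qed.

Lemma w_span j : exists z, evec R j = \sum_k (z k)%:~R *: w k.
Proof.
have [f [Gf phi_f]] := phi_onto (Kgroup_transl_evec R c' j).
have cs : centralizes_squares G f.
  by apply/(phi_centralizes_squares Gf); rewrite phi_f; exact: transl_centralizes_squares.
have [b f_b b_int] := centralizes_squares_transl Gf cs.
pose z k := Num.floor (b k 0).
have b_sum : b = \sum_k (z k)%:~R *: evec R k.
  by apply/colP => k; rewrite sum_scale_evec floorK.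
exists z; have [_ phi_sum] := phi_transl_sum z.
by move: phi_f; rewrite f_b b_sum phi_sum => /aff_inj[].
Qed.

Let S i := aff_sign (phi (Kgen c i)).
Let b' i := phi (Kgen c i) 0.

Lemma phi_Kgen i : (i < n)%N -> phi (Kgen c i) = aff (S i) (b' i) /\ Kaffine c' (S i) (b' i).
Proof. by move=> lt_i; apply/Kgroup_affE/phi_in/Kgroup_Kgen. Qed.

Lemma S_neq0 i : (i < n)%N -> exists j, S i j.
Proof.
move=> lt_i; have [phi_g _] := phi_Kgen lt_i; have Gg := Kgroup_Kgen R c lt_i.
suff /existsP : [exists j, S i j] by [].
apply: contraT => /existsPn S0.
have cs : centralizes_squares G (Kgen c i).
  apply/(phi_centralizes_squares Gg); rewrite phi_g.
  have -> : S i = (fun=> false) by apply: funext => j; exact/negbTE/S0.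
  exact: transl_centralizes_squares.
have [b g_b _] := centralizes_squares_transl Gg cs.
by have [/(congr1 (@^~ i)) /=] := aff_inj g_b; rewrite eqxx.
Qed.

Lemma w_supp i j : (i < n)%N -> ~~ S i j -> w i j 0 = 0.
Proof.
move=> lt_i; have [phi_g _] := phi_Kgen lt_i; have Gg := Kgroup_Kgen R c lt_i.
have [phi_t _] := phi_transl_evec i; have Gt := Kgroup_transl_evec R c i.
have conj : transl (evec R i) \o Kgen c i \o transl (evec R i) = Kgen c i.
  by apply/transl_conj_aff => k /= /negbTE ki; rewrite evecE ki.
have := congr1 phi conj; rewrite (phiM (gen_comp Gt Gg) Gt) (phiM Gt Gg) phi_t phi_g.
by move/transl_conj_aff; apply.
Qed.

Lemma w_vanish i k j : (i < n)%N -> k != i -> S i j -> w k j 0 = 0.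
Proof.
move=> lt_i ki; have [phi_g _] := phi_Kgen lt_i; have Gg := Kgroup_Kgen R c lt_i.
have [phi_t _] := phi_transl_evec k; have Gt := Kgroup_transl_evec R c k.
have comm : Kgen c i \o transl (evec R k) = transl (evec R k) \o Kgen c i.
  by apply/aff_transl_comm => j' /eqP ->; rewrite evecE eq_sym (negbTE ki).
have := congr1 phi comm; rewrite (phiM Gg Gt) (phiM Gt Gg) phi_t phi_g.
by move/aff_transl_comm; apply.
Qed.

Lemma grp_iso_arrow_iso : exists sigma, arrow_iso c c' sigma.
Proof.
have w_int k j : w k j 0 \is a Num.int by have [_] := phi_transl_evec k.
have S_sub i j : (i < n)%N -> S i j -> (j < n)%N by move=> /phi_Kgen[_ [+ _]]; apply.
have [sigma [sigma_inj sigma_max S_sigma w_sigma]] :=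
  signed_perm_of_span w_int w_span S_neq0 S_sub w_supp w_vanish.
exists sigma; split=> // k i lt_i.
have [-> | ki] := eqVneq k i; first by rewrite !arrownn.
have [phi_g [_ b'_half]] := phi_Kgen lt_i; have Gg := Kgroup_Kgen R c lt_i.
(* [phi] maps [(Kgen c i)^2 = L_(2 c_i)] to a translation whose coordinate
   [sigma k] is [+- 2 (c_i)_k] on one side and [2 b'_(sigma k)] on the other. *)
have [_ phi_sq] := phi_transl_sum (fun k => (arrow c k i : nat)).
have := congr1 phi (Kgen_sq R c i).
rewrite (phiM Gg Gg) phi_g aff_sq phi_sq => /aff_inj[_ /colP/(_ (sigma k))].
rewrite mxE (S_sigma i lt_i) /= (inj_eq sigma_inj) (negbTE ki) expr0 mul1r.
rewrite (sum_scale_single _ (i := k)) => [|k' k'k]; last first.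
  have [e ->] := w_sigma k'; rewrite mxE evecE (inj_eq sigma_inj) eq_sym (negbTE k'k).
  by rewrite mulr0.
have [e ->] := w_sigma k; rewrite mxE evecE eqxx mulr1 => sq_k.
apply: (half_int_parity (e := e) (x := b' i (sigma k) 0)); last by rewrite -sq_k; ring.
by have := b'_half (sigma k); rewrite /arrow_parity (eq_bigl _ _ (S_sigma i lt_i)) big_pred1_eq.
Qed.

End Isomorphism.

Section Rigidity.
Variables (n : nat) (c c' : 'I_n.+1 -> 'I_n.+1 -> bool) (sigma : 'I_n.+1 -> 'I_n.+1).
Hypothesis sigma_iso : arrow_iso c c' sigma.

Lemma sigma_id i : sigma i = i.
Proof.
have [sigma_inj sigma_max arrow_sigma] := sigma_iso.
suff sigma_ge m (j : 'I_n.+1) : (n - m <= j)%N -> sigma j = j.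
  by apply: (sigma_ge n); rewrite subnn.
elim: m j => [|m IH] j ge_j.
  by rewrite subn0 in ge_j; rewrite (ord_max_ge ge_j).
case: (leqP (n - m) j) => [|lt_j]; first exact: IH.
have lt_j1 : (j.+1 < n.+1)%N by lia.
have lt_jn : (j < n)%N by lia.
have := arrow_sigma (Ordinal lt_j1) j lt_jn.
rewrite /arrow eqxx (IH (Ordinal lt_j1)) /=; last by lia.
case/esym/orP => [/eqP [] /val_inj/esym // | /andP[lt_sj _]].
by apply: sigma_inj; apply: IH; lia.
Qed.

Lemma arrow_iso_Karray_eq (R : realType) : Karray R c = Karray R c'.
Proof.
have [_ _ arrow_sigma] := sigma_iso.
by apply/Karray_eq_arrow => k i lt_i; rewrite arrow_sigma // !sigma_id.
Qed.
End Rigidity.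

Lemma digraph_iso_arrow_iso (R : realType) n (c c' : 'I_n.+1 -> 'I_n.+1 -> bool) :
  (0 < n)%N -> digraph_iso (Kgraph (Karray R c)) (Kgraph (Karray R c')) ->
  exists sigma, arrow_iso c c' sigma.
Proof.
move=> n_gt0 [s graph_s]; exists s.
have s_max : s ord_max = ord_max.
  have := Kgraph_loop R c n_gt0; rewrite graph_s.
  case: (eqVneq (s ord_max) ord_max) => // sl.
  by rewrite Kgraph_arrow ?arrownn // ltn_ord_max.
have lt_s (i : 'I_n.+1) : (i < n)%N -> (s i < n)%N.
  by rewrite !ltn_ord_max -[X in _ -> _ != X]s_max (inj_eq perm_inj).
split=> [|//|k i lt_i]; first exact: perm_inj.
by rewrite -!(Kgraph_arrow R) ?lt_s.
Qed.

Theorem proposition4p4 (R : realType) (n : nat) (c c' : 'I_n -> 'I_n -> bool) :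
  (2 <= n)%N ->
  (grp_iso (@Kgroup R n c) (@Kgroup R n c') <-> @Karray R n c = @Karray R n c') /\
  (@Karray R n c = @Karray R n c' <->
     digraph_iso (Kgraph (@Karray R n c)) (Kgraph (@Karray R n c'))).
Proof.
case: n c c' => [|n] c c' // n_gt0.
split; split.
- case=> phi [phi_in phi_inj phi_onto phiM].
  have [sigma sigma_iso] := grp_iso_arrow_iso phi_in phi_inj phi_onto phiM.
  exact: arrow_iso_Karray_eq sigma_iso R.
- by move/Kgroup_eq => <-; exact: grp_iso_refl.
- by move=> <-; exists 1%g => i j; rewrite !perm1.
- case/(digraph_iso_arrow_iso n_gt0) => sigma sigma_iso.
  exact: arrow_iso_Karray_eq sigma_iso R.
Qed.
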